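(* Assume that $f_a(0)=-\infty$ for every $a\in A$. Let $\theta\in\mathbb R^n$ and let $p^*\in\mathcal M_1^+(A)$ with $I(p^* )-\sum_j\theta_j\langle p^*,H_j\rangle$ finite. Then $p^*$ satisfies the variational principle with parameters $\theta$ if and only if there exists $\alpha\in\mathbb R$ such that $p^*_a>0$ and $$f_a(p^*_a)=-\alpha-\sum_{j=1}^n\theta_jH_j(a)\qquad\text{for all }a\in A.$$
   Context: Let $A$ be a finite or countable set and $\mathcal M_1^+(A)$ the set of probability distributions $p=(p_a)_{a\in A}$ on $A$. For each $a\in A$ let $h_a:[0,1]\to\mathbb R$ be continuous and strictly concave with $h_a(0)=h_a(1)=0$, differentiable on $(0,1)$ with $h_a'(u)=-f_a(u)$, where $f_a$ extends to a continuous (necessarily strictly increasing) function on $(0,1]$; put $f_a(0)=\lim_{u\downarrow0}f_a(u)\in[-\infty,\infty)$. The generalised entropy is $I(p)=\sum_{a\in A}h_a(p_a)\in[0,+\infty]$. Let $H_1,\dots,H_n:A\to\mathbb R$ be functions bounded from below, and write $\langle p,X\rangle=\sum_{a}p_aX(a)$. A distribution $p^*\in\mathcal M_1^+(A)$ satisfies the variational principle with parameters $\theta=(\theta_1,\dots,\theta_n)\in\mathbb R^n$ if $+\infty> I(p^* )-\sum_{j=1}^n\theta_j\langle p^*,H_j\rangle\ \ge\ I(p)-\sum_{j=1}^n\theta_j\langle p,H_j\rangle$ for all $p\in\mathcal M_1^+(A)$. *)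

From Stdlib Require Import Reals Lra List.
Import ListNotations.
Open Scope R_scope.

Definition sum_list (l : list R) : R := fold_right Rplus 0 l.

Definition sum_upto (n : nat) (g : nat -> R) : R := sum_list (map g (seq 0 n)).

(* g is summable over A with sum s: the finite partial sums over finite sets
   F (duplicate-free lists) converge to s along the directed set of finite sets. *)
Definition HasSum {A : Type} (g : A -> R) (s : R) : Prop :=
  forall eps, 0 < eps -> exists F0 : list A,
    forall F : list A, NoDup F -> incl F0 F ->
      Rabs (sum_list (map g F) - s) < eps.

Definition SumPInf {A : Type} (g : A -> R) : Prop :=
  forall M, exists F0 : list A,
    forall F : list A, NoDup F -> incl F0 F -> M < sum_list (map g F).

Inductive Rbar : Type := Fin (r : R) | PInf | MInf.

Definition Rbar_le (x y : Rbar) : Prop :=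
  match x, y with
  | MInf, _ => True
  | _, PInf => True
  | Fin a, Fin b => a <= b
  | _, _ => False
  end.

(* scaling by a real, with the convention 0 * (+-infinity) = 0 *)
Definition Rbar_scale (c : R) (x : Rbar) : Rbar :=
  match x with
  | Fin r => Fin (c * r)
  | PInf => if Req_EM_T c 0 then Fin 0 else if Rlt_dec 0 c then PInf else MInf
  | MInf => if Req_EM_T c 0 then Fin 0 else if Rlt_dec 0 c then MInf else PInf
  end.

(* extended addition; None when undefined (+inf + -inf) *)
Definition Rbar_plus_opt (x y : Rbar) : option Rbar :=
  match x, y with
  | Fin a, Fin b => Some (Fin (a + b))
  | PInf, MInf | MInf, PInf => None
  | PInf, _ | _, PInf => Some PInf
  | MInf, _ | _, MInf => Some MInf
  end.

Definition Rbar_sum_opt (l : list Rbar) : option Rbar :=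
  fold_right (fun x acc => match acc with
                           | None => None
                           | Some y => Rbar_plus_opt x y
                           end) (Some (Fin 0)) l.

(* value in [-inf,+inf] of a series (as an unordered sum): either a finite sum
   or divergence to +infinity (the only cases occurring below, where the terms
   are bounded below by a summable family). *)
Definition esum_val {A : Type} (g : A -> R) (v : Rbar) : Prop :=
  (exists s, v = Fin s /\ HasSum g s) \/ (v = PInf /\ SumPInf g).

Definition countable (A : Type) : Prop :=
  exists enc : A -> nat, forall x y, enc x = enc y -> x = y.

Definition is_prob {A : Type} (p : A -> R) : Prop :=
  (forall a, 0 <= p a) /\ HasSum p 1.

Definition entropy_fun (h f : R -> R) : Prop :=
  (forall u, 0 <= u <= 1 -> continue_in h (fun x => 0 <= x <= 1) u) /\
  (forall x y t, 0 <= x <= 1 -> 0 <= y <= 1 -> x <> y -> 0 < t < 1 ->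
      t * h x + (1 - t) * h y < h (t * x + (1 - t) * y)) /\
  h 0 = 0 /\ h 1 = 0 /\
  (forall u, 0 < u < 1 -> derivable_pt_lim h u (- f u)) /\
  (forall u, 0 < u <= 1 -> continue_in f (fun x => 0 < x <= 1) u).

(* f_a(0) = lim_{u -> 0+} f_a(u) = -infinity *)
Definition f_zero_minf (f : R -> R) : Prop :=
  forall M, exists delta, 0 < delta /\ forall u, 0 < u < delta -> f u < M.

Definition I_val {A : Type} (h : A -> R -> R) (p : A -> R) (v : Rbar) : Prop :=
  esum_val (fun a => h a (p a)) v.

Definition pair_val {A : Type} (p : A -> R) (X : A -> R) (v : Rbar) : Prop :=
  esum_val (fun a => p a * X a) v.

Definition functional_val {A : Type} (h : A -> R -> R) (n : nat)
    (H : nat -> A -> R) (theta : nat -> R) (p : A -> R) (v : Rbar) : Prop :=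
  exists (vI : Rbar) (vH : nat -> Rbar),
    I_val h p vI /\
    (forall j, (j < n)%nat -> pair_val p (H j) (vH j)) /\
    Rbar_sum_opt (vI :: map (fun j => Rbar_scale (- theta j) (vH j)) (seq 0 n))
      = Some v.

(* pstar satisfies the variational principle with parameters theta:
   +inf > I(pstar) - sum theta_j <pstar,H_j> >= I(p) - sum theta_j <p,H_j>
   for every probability distribution p (for which the right-hand side is
   defined). *)
Definition variational_principle {A : Type} (h : A -> R -> R) (n : nat)
    (H : nat -> A -> R) (theta : nat -> R) (pstar : A -> R) : Prop :=
  exists c : R,
    functional_val h n H theta pstar (Fin c) /\
    forall p, is_prob p -> forall v, functional_val h n H theta p v ->
      Rbar_le v (Fin c).

(* Necessity.  Moving a mass e from a point b to a point a turns pstar into a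
   probability p' with F(p') = F(pstar) + g(e), where g(e) is an explicit
   "transfer gain" involving only h_a, h_b and the energies
   E(x) = sum_j theta_j H_j(x); optimality forces g(e) <= 0.  If pstar_a = 0,
   the tangent bound for h_a at e and the chord bound for h_b show that
   g(e) <= 0 forces f_a(e) to stay bounded below as e -> 0+, contradicting
   f_a(0+) = -infinity; so pstar > 0.  Then g is differentiable at 0 with
   g'(0) = f_b(pstar_b) + E_b - f_a(pstar_a) - E_a, which must be <= 0 for every
   ordered pair (a, b): hence f_a(pstar_a) + E_a is a constant -alpha.

   Sufficiency.  The tangent inequality for the concave h_a at pstar_a gives the
   pointwise bound L_p(a) <= L_pstar(a) + alpha (p_a - pstar_a) for the Lagrangian
   density L_p(a) = h_a(p_a) - p_a E_a.  The right-hand side is summable with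
   sum F(pstar); since F(p) is an extended sum of n+1 series each minorised by a
   summable family, this domination makes F(p) finite, equal to sum_a L_p(a),
   and hence at most F(pstar). *)

From Stdlib Require Import Reals Lra Lia List Classical ClassicalEpsilon.
Import ListNotations.
Open Scope R_scope.

Lemma sum_list_map_plus {B} (f g : B -> R) l :
  sum_list (map (fun x => f x + g x) l) = sum_list (map f l) + sum_list (map g l).
Proof. induction l as [|x l IH]; simpl; [lra|]. rewrite IH; lra. Qed.

Lemma sum_list_map_scal {B} (c : R) (f : B -> R) l :
  sum_list (map (fun x => c * f x) l) = c * sum_list (map f l).
Proof. induction l as [|x l IH]; simpl; [lra|]. rewrite IH; lra. Qed.

Lemma sum_list_map_le {B} (f g : B -> R) l : (forall x, f x <= g x) ->
  sum_list (map f l) <= sum_list (map g l).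
Proof. intros Hfg; induction l as [|x l IH]; simpl; [lra|]. specialize (Hfg x); lra. Qed.

Lemma sum_list_map_ext {B} (f g : B -> R) l : (forall x, f x = g x) ->
  sum_list (map f l) = sum_list (map g l).
Proof. intros Hfg; induction l as [|x l IH]; simpl; [lra|]. rewrite Hfg, IH; lra. Qed.

Lemma sum_list_map_zero {B} (l : list B) : sum_list (map (fun _ => 0) l) = 0.
Proof. induction l; simpl; lra. Qed.

Lemma nodup_superlist {B} (l : list B) : exists F, NoDup F /\ incl l F.
Proof.
  induction l as [|x l IH].
  - exists []. split; [constructor | intros y []].
  - destruct IH as [F [HN Hi]].
    destruct (classic (In x F)) as [Hin|Hnin].
    + exists F. split; auto. intros y [<-|Hy]; auto.
    + exists (x :: F). split; [constructor; auto|].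
      intros y [<-|Hy]; [left|right]; auto.
Qed.

Lemma common_nodup_superlist {B} (l1 l2 : list B) :
  exists F, NoDup F /\ incl l1 F /\ incl l2 F.
Proof.
  destruct (nodup_superlist (l1 ++ l2)) as [F [HN Hi]].
  apply incl_app_inv in Hi. exists F; tauto.
Qed.

Section UnorderedSums.
Context {A : Type}.

Lemma HasSum_ext (f g : A -> R) s : (forall a, f a = g a) -> HasSum f s -> HasSum g s.
Proof.
  intros He Hs eps Heps. destruct (Hs eps Heps) as [F0 HF0]. exists F0.
  intros F HN Hi. rewrite <- (sum_list_map_ext f g F He). auto.
Qed.

Lemma HasSum_plus (f g : A -> R) s t : HasSum f s -> HasSum g t ->
  HasSum (fun a => f a + g a) (s + t).
Proof.
  intros Hf Hg eps Heps.
  destruct (Hf (eps/2) ltac:(lra)) as [F1 H1].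
  destruct (Hg (eps/2) ltac:(lra)) as [F2 H2].
  exists (F1 ++ F2). intros F HN Hi. apply incl_app_inv in Hi as [Hi1 Hi2].
  rewrite sum_list_map_plus.
  specialize (H1 F HN Hi1). specialize (H2 F HN Hi2).
  apply Rabs_def2 in H1; apply Rabs_def2 in H2. apply Rabs_def1; lra.
Qed.

Lemma HasSum_scal (c : R) (f : A -> R) s : HasSum f s -> HasSum (fun a => c * f a) (c * s).
Proof.
  intros Hf eps Heps.
  pose proof (Rabs_pos c) as Hc.
  destruct (Hf (eps / (Rabs c + 1))) as [F0 H0].
  { apply Rdiv_lt_0_compat; lra. }
  exists F0. intros F HN Hi. rewrite sum_list_map_scal.
  specialize (H0 F HN Hi).
  replace (c * sum_list (map f F) - c * s) with (c * (sum_list (map f F) - s)) by ring.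
  rewrite Rabs_mult.
  pose proof (Rabs_pos (sum_list (map f F) - s)).
  apply Rle_lt_trans with ((Rabs c + 1) * Rabs (sum_list (map f F) - s)); [nra|].
  replace eps with ((Rabs c + 1) * (eps / (Rabs c + 1))) by (field; lra).
  apply Rmult_lt_compat_l; lra.
Qed.

Lemma HasSum_minus (f g : A -> R) s t : HasSum f s -> HasSum g t ->
  HasSum (fun a => f a - g a) (s - t).
Proof.
  intros Hf Hg. apply HasSum_ext with (fun a => f a + -1 * g a); [intros; ring|].
  replace (s - t) with (s + -1 * t) by ring. apply HasSum_plus, HasSum_scal; auto.
Qed.

Lemma HasSum_zero : HasSum (fun _ : A => 0) 0.
Proof.
  intros eps Heps. exists []. intros F _ _. rewrite sum_list_map_zero.
  rewrite Rminus_0_r, Rabs_R0; auto.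
Qed.

Lemma HasSum_le (f g : A -> R) s t :
  (forall a, f a <= g a) -> HasSum f s -> HasSum g t -> s <= t.
Proof.
  intros Hle Hf Hg. destruct (Rle_dec s t) as [|Hn]; auto. exfalso.
  set (eps := (s - t) / 2).
  destruct (Hf eps ltac:(unfold eps; lra)) as [F1 H1].
  destruct (Hg eps ltac:(unfold eps; lra)) as [F2 H2].
  destruct (common_nodup_superlist F1 F2) as [F [HN [Hi1 Hi2]]].
  specialize (H1 F HN Hi1). specialize (H2 F HN Hi2).
  pose proof (sum_list_map_le f g F Hle).
  apply Rabs_def2 in H1; apply Rabs_def2 in H2. unfold eps in *; lra.
Qed.

Lemma HasSum_unique (f : A -> R) s t : HasSum f s -> HasSum f t -> s = t.
Proof. intros H1 H2. apply Rle_antisym; eapply HasSum_le; eauto; intros; lra. Qed.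

Lemma SumPInf_dominated (f g : A -> R) t :
  (forall a, f a <= g a) -> HasSum g t -> ~ SumPInf f.
Proof.
  intros Hle Hg Hf.
  destruct (Hf (t + 1)) as [F1 H1].
  destruct (Hg 1 ltac:(lra)) as [F2 H2].
  destruct (common_nodup_superlist F1 F2) as [F [HN [Hi1 Hi2]]].
  specialize (H1 F HN Hi1). specialize (H2 F HN Hi2).
  pose proof (sum_list_map_le f g F Hle).
  apply Rabs_def2 in H2. lra.
Qed.

Lemma SumPInf_scal (c : R) (f : A -> R) : 0 < c -> SumPInf f -> SumPInf (fun a => c * f a).
Proof.
  intros Hc Hf M. destruct (Hf (M / c)) as [F0 H0]. exists F0.
  intros F HN Hi. rewrite sum_list_map_scal. specialize (H0 F HN Hi).
  apply Rmult_lt_compat_l with (r := c) in H0; auto.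
  replace (c * (M / c)) with M in H0 by (field; lra). auto.
Qed.

Lemma SumPInf_plus (f g : A -> R) t : SumPInf f -> HasSum g t -> SumPInf (fun a => f a + g a).
Proof.
  intros Hf Hg M.
  destruct (Hf (M - t + 1)) as [F1 H1].
  destruct (Hg 1 ltac:(lra)) as [F2 H2].
  exists (F1 ++ F2). intros F HN Hi. apply incl_app_inv in Hi as [Hi1 Hi2].
  rewrite sum_list_map_plus.
  specialize (H1 F HN Hi1). specialize (H2 F HN Hi2).
  apply Rabs_def2 in H2. lra.
Qed.

Definition indicator (a x : A) : R :=
  if excluded_middle_informative (x = a) then 1 else 0.

Lemma indicator_eq (a x : A) : x = a -> indicator a x = 1.
Proof. intros ->; unfold indicator; destruct (excluded_middle_informative (a = a)); tauto. Qed.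

Lemma indicator_neq (a x : A) : x <> a -> indicator a x = 0.
Proof. intros Hn; unfold indicator; destruct (excluded_middle_informative (x = a)); tauto. Qed.

Lemma sum_indicator (a : A) F : NoDup F -> In a F -> sum_list (map (indicator a) F) = 1.
Proof.
  assert (Hout : forall l, ~ In a l -> sum_list (map (indicator a) l) = 0).
  { induction l as [|x l IH]; simpl; intros Hn; [lra|].
    assert (Hx : x <> a) by (intros ->; tauto).
    rewrite (indicator_neq a x Hx), IH; [lra|tauto]. }
  induction F as [|x F IH]; simpl; intros HN Hin; [tauto|].
  inversion HN as [|? ? Hx HF]; subst.
  destruct (classic (x = a)) as [->|Hne].
  - rewrite indicator_eq, Hout; auto; lra.
  - rewrite indicator_neq, IH; auto; [lra|]. destruct Hin; congruence.
Qed.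

Lemma HasSum_indicator (a : A) : HasSum (indicator a) 1.
Proof.
  intros eps Heps. exists [a]. intros F HN Hi.
  rewrite sum_indicator; auto; [|apply Hi; left; auto].
  rewrite Rminus_diag, Rabs_R0; auto.
Qed.

Lemma HasSum_two_point_support (d : A -> R) a b : a <> b ->
  (forall x, x <> a -> x <> b -> d x = 0) -> HasSum d (d a + d b).
Proof.
  intros Hab Hd.
  apply HasSum_ext with (f := fun x => d a * indicator a x + d b * indicator b x).
  - intros x.
    destruct (classic (x = a)) as [->|Ha].
    { rewrite (indicator_eq a a), (indicator_neq b a); auto; lra. }
    destruct (classic (x = b)) as [->|Hb].
    { rewrite (indicator_neq a b), (indicator_eq b b); auto; lra. }
    rewrite (Hd x Ha Hb), (indicator_neq a x), (indicator_neq b x); auto; lra.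
  - replace (d a + d b) with (d a * 1 + d b * 1) by ring.
    apply HasSum_plus; apply HasSum_scal; apply HasSum_indicator.
Qed.

End UnorderedSums.

(* Shifting a (finite) extended real by s; infinite values are unchanged.
   Modifying finitely many terms of the series shifts their values. *)
Definition shift (x : Rbar) (s : R) : Rbar :=
  match x with Fin r => Fin (r + s) | y => y end.

Lemma plus_shift x y s t : Rbar_plus_opt (shift x s) (shift y t) =
  option_map (fun z => shift z (s + t)) (Rbar_plus_opt x y).
Proof. destruct x, y; simpl; auto. f_equal; f_equal; ring. Qed.

Lemma scale_shift c x s : Rbar_scale c (shift x s) = shift (Rbar_scale c x) (c * s).
Proof.
  destruct x; simpl; [f_equal; ring| |];
  destruct (Req_EM_T c 0) as [->|]; simpl; try (f_equal; ring);
  destruct (Rlt_dec 0 c); auto.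
Qed.

Lemma sum_shift (e : nat -> Rbar) (s : nat -> R) ks v :
  Rbar_sum_opt (map e ks) = Some v ->
  Rbar_sum_opt (map (fun k => shift (e k) (s k)) ks) =
    Some (shift v (sum_list (map s ks))).
Proof.
  revert v; induction ks as [|k ks IH]; simpl; intros v Hv.
  - inversion Hv; subst; simpl. f_equal; f_equal; ring.
  - destruct (Rbar_sum_opt (map e ks)) as [y|] eqn:Hy; [|discriminate].
    rewrite (IH y eq_refl).
    change (Rbar_plus_opt (shift (e k) (s k)) (shift y (sum_list (map s ks))) =
            Some (shift v (s k + sum_list (map s ks)))).
    rewrite plus_shift, Hv. reflexivity.
Qed.

Lemma Rbar_sum_fin_terms l c :
  Rbar_sum_opt l = Some (Fin c) -> forall x, In x l -> exists r, x = Fin r.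
Proof.
  revert c; induction l as [|y l IH]; simpl; intros c Hc x Hx; [tauto|].
  destruct (Rbar_sum_opt l) as [z|] eqn:Hz; [|discriminate].
  destruct Hx as [<-|Hx]; destruct y, z; simpl in Hc; try discriminate; eauto.
Qed.

Lemma Rbar_sum_no_minf_terms l v :
  Rbar_sum_opt l = Some v -> v <> MInf -> forall x, In x l -> x <> MInf.
Proof.
  revert v; induction l as [|y l IH]; simpl; intros v Hc Hv x Hx; [tauto|].
  destruct (Rbar_sum_opt l) as [z|] eqn:Hz; [|discriminate].
  destruct Hx as [<-|Hx].
  - destruct y, z; simpl in Hc; try discriminate; inversion Hc; subst; congruence.
  - apply (IH z eq_refl); auto.
    intros ->. destruct y; simpl in Hc; try discriminate; inversion Hc; subst; congruence.
Qed.

Section SeriesLists.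
Context {A : Type}.

Definition summably_minorised (G : A -> R) : Prop :=
  exists L sL, HasSum L sL /\ forall a, L a <= G a.

Definition partial_sum (G : nat -> A -> R) (ks : list nat) (a : A) : R :=
  sum_list (map (fun k => G k a) ks).

Lemma esum_list_fin (G : nat -> A -> R) e ks :
  (forall k, In k ks -> exists w, e k = Fin w /\ HasSum (G k) w) ->
  exists W, Rbar_sum_opt (map e ks) = Some (Fin W) /\ HasSum (partial_sum G ks) W.
Proof.
  unfold partial_sum; induction ks as [|k ks IH]; simpl; intros Hk.
  - exists 0; split; auto. apply HasSum_zero.
  - destruct IH as [W [H1 H2]]; [intros; apply Hk; auto|].
    destruct (Hk k (or_introl eq_refl)) as [w [Hw Hs]].
    exists (w + W). rewrite H1, Hw. split; [reflexivity|].
    apply HasSum_plus; auto.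
Qed.

Lemma partial_sum_minorised (G : nat -> A -> R) ks :
  (forall k, In k ks -> summably_minorised (G k)) ->
  summably_minorised (partial_sum G ks).
Proof.
  unfold partial_sum; induction ks as [|k ks IH]; simpl; intros Hk.
  - exists (fun _ => 0), 0; split; [apply HasSum_zero|]. intros; lra.
  - destruct IH as [L [sL [H1 H2]]]; [intros; apply Hk; auto|].
    destruct (Hk k (or_introl eq_refl)) as [L0 [s0 [H3 H4]]].
    exists (fun a => L0 a + L a), (s0 + sL); split; [apply HasSum_plus; auto|].
    intros a; specialize (H2 a); specialize (H4 a); lra.
Qed.

(* If summably minorised families have a summably majorised total, each of
   them is summably majorised (subtract the minorants of the others). *)
Lemma term_majorised (G : nat -> A -> R) ks :
  (forall k, In k ks -> summably_minorised (G k)) ->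
  forall U sU, HasSum U sU -> (forall a, partial_sum G ks a <= U a) ->
  forall k, In k ks -> exists V sV, HasSum V sV /\ forall a, G k a <= V a.
Proof.
  unfold partial_sum; induction ks as [|k0 ks IH]; simpl;
    intros Hk U sU HU Hle k Hin; [tauto|].
  destruct (Hk k0 (or_introl eq_refl)) as [L0 [s0 [H3 H4]]].
  destruct Hin as [<-|Hin].
  - destruct (partial_sum_minorised G ks) as [L [sL [H1 H2]]]; [intros; apply Hk; auto|].
    exists (fun a => U a - L a), (sU - sL). split; [apply HasSum_minus; auto|].
    intros a; specialize (H2 a); specialize (Hle a); unfold partial_sum in H2; lra.
  - apply (IH (fun k Hk' => Hk k (or_intror Hk')) (fun a => U a - L0 a) (sU - s0));
      auto; [apply HasSum_minus; auto|].
    intros a; specialize (H4 a); specialize (Hle a); lra.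
Qed.

Lemma esum_list_dominated (G : nat -> A -> R) e ks v :
  (forall k, In k ks -> esum_val (G k) (e k) /\ summably_minorised (G k)) ->
  Rbar_sum_opt (map e ks) = Some v ->
  forall U sU, HasSum U sU -> (forall a, partial_sum G ks a <= U a) ->
  exists W, v = Fin W /\ HasSum (partial_sum G ks) W.
Proof.
  intros Hk Hv U sU HU Hle.
  destruct (esum_list_fin G e ks) as [W [H1 H2]].
  - intros k Hin. destruct (Hk k Hin) as [[Hf|[_ Hp]] _]; auto.
    exfalso. destruct (term_majorised G ks (fun k Hk' => proj2 (Hk k Hk')) U sU HU Hle k Hin)
      as [V [sV [HV HGV]]].
    exact (SumPInf_dominated _ _ _ HGV HV Hp).
  - exists W; split; auto. rewrite Hv in H1; inversion H1; auto.
Qed.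

Lemma esum_list_of_fin (G : nat -> A -> R) e ks c :
  (forall k, In k ks -> esum_val (G k) (e k)) ->
  Rbar_sum_opt (map e ks) = Some (Fin c) -> HasSum (partial_sum G ks) c.
Proof.
  intros Hk Hv.
  destruct (esum_list_fin G e ks) as [W [H1 H2]].
  - intros k Hin. destruct (Hk k Hin) as [Hf|[Hp _]]; auto.
    exfalso. destruct (Rbar_sum_fin_terms _ _ Hv (e k)) as [r Hr];
      [apply in_map; auto|congruence].
  - rewrite Hv in H1; inversion H1; subst; auto.
Qed.

Lemma esum_shift (g g' d : A -> R) v s : esum_val g v -> HasSum d s ->
  (forall x, g' x = g x + d x) -> esum_val g' (shift v s).
Proof.
  intros [[w [-> Hw]]|[-> Hp]] Hd He.
  - left. exists (w + s); split; auto.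
    apply HasSum_ext with (fun x => g x + d x); [intros; auto|]. apply HasSum_plus; auto.
  - right; split; auto. intros M. destruct (SumPInf_plus g d s Hp Hd M) as [F0 HF].
    exists F0; intros F HN Hi. rewrite (sum_list_map_ext g' (fun x => g x + d x)); auto.
Qed.

End SeriesLists.

Section Decomposition.
Context {A : Type} (h : A -> R -> R) (n : nat) (H : nat -> A -> R) (theta : nat -> R).

(* The functional is an extended sum of n+1 series: the entropy series
   (index 0) and the scaled pairings -theta_j <p,H_j> (index j+1). *)
Definition term (p : A -> R) (k : nat) (a : A) : R :=
  match k with O => h a (p a) | S j => - theta j * (p a * H j a) end.

Definition term_val (vI : Rbar) (vH : nat -> Rbar) (k : nat) : Rbar :=
  match k with O => vI | S j => Rbar_scale (- theta j) (vH j) end.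

Lemma functional_terms vI vH :
  vI :: map (fun j => Rbar_scale (- theta j) (vH j)) (seq 0 n)
  = map (term_val vI vH) (seq 0 (S n)).
Proof. simpl. f_equal. rewrite <- seq_shift, map_map. reflexivity. Qed.

Definition energy (a : A) : R := sum_upto n (fun j => theta j * H j a).

Definition lagrangian (p : A -> R) (a : A) : R := h a (p a) - p a * energy a.

Lemma partial_sum_terms p a : partial_sum (term p) (seq 0 (S n)) a = lagrangian p a.
Proof.
  unfold partial_sum, lagrangian, energy, sum_upto. simpl.
  rewrite <- seq_shift, map_map.
  rewrite (sum_list_map_ext _ (fun j => (- p a) * (theta j * H j a))); [|intros; simpl; ring].
  rewrite sum_list_map_scal. ring.
Qed.

Lemma functional_val_terms p v :
  functional_val h n H theta p v -> v <> MInf ->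
  exists vI vH, Rbar_sum_opt (map (term_val vI vH) (seq 0 (S n))) = Some v /\
    forall k, In k (seq 0 (S n)) -> esum_val (term p k) (term_val vI vH k).
Proof.
  intros [vI [vH [HI [HH Hs]]]] Hv.
  rewrite functional_terms in Hs. exists vI, vH; split; auto.
  intros [|j] Hk; [exact HI|].
  pose proof (Rbar_sum_no_minf_terms _ _ Hs Hv _ (in_map _ _ _ Hk)) as HnM.
  apply in_seq in Hk. specialize (HH j ltac:(lia)). simpl in HnM |- *.
  destruct HH as [[s [Hvs Hss]]|[Hvs Hsp]]; rewrite Hvs in HnM |- *; simpl in HnM |- *.
  - left. exists (- theta j * s); split; auto. apply HasSum_scal; auto.
  - destruct (Req_EM_T (- theta j) 0) as [E|NE].
    + left; exists 0; split; auto.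
      apply HasSum_ext with (fun _ => 0); [intros; simpl; rewrite E; ring|apply HasSum_zero].
    + destruct (Rlt_dec 0 (- theta j)) as [Pos|NP]; [|congruence].
      right; split; auto. apply SumPInf_scal; auto.
Qed.

(* Each of the n+1 series of a probability is summably minorised: the entropy
   terms are nonnegative, a pairing with nonnegative weight is minorised by
   the lower bound of H_j, and one with negative weight is majorised, hence
   converges. *)
Lemma term_minorised p k w :
  (forall j, (j < n)%nat -> exists m, forall a, m <= H j a) ->
  is_prob p -> (forall a, 0 <= h a (p a)) -> In k (seq 0 (S n)) ->
  esum_val (term p k) w -> summably_minorised (term p k).
Proof.
  intros hH [Hp0 Hp1] hh Hk Hw. destruct k as [|j].
  - exists (fun _ => 0), 0; split; [apply HasSum_zero|]. exact hh.
  - apply in_seq in Hk. destruct (hH j ltac:(lia)) as [m Hm].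
    assert (Hsum : HasSum (fun a => - theta j * (m * p a)) (- theta j * (m * 1)))
      by (apply HasSum_scal, HasSum_scal; exact Hp1).
    destruct (Rle_dec 0 (- theta j)) as [Hnn|Hneg].
    + exists (fun a => - theta j * (m * p a)), (- theta j * (m * 1)); split; auto.
      intros a; simpl. specialize (Hm a). specialize (Hp0 a).
      assert (0 <= p a * (H j a - m)) by nra. nra.
    + destruct Hw as [[s [_ Hs]]|[_ Hinf]].
      * exists (term p (S j)), s; split; auto. intros; lra.
      * exfalso. refine (SumPInf_dominated _ _ _ _ Hsum Hinf).
        intros a; simpl. specialize (Hm a). specialize (Hp0 a).
        assert (0 <= p a * (H j a - m)) by nra. nra.
Qed.

Lemma functional_val_fin p c :
  functional_val h n H theta p (Fin c) -> HasSum (lagrangian p) c.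
Proof.
  intros Hf. destruct (functional_val_terms p _ Hf ltac:(discriminate))
    as [vI [vH [Hs Hk]]].
  apply HasSum_ext with (partial_sum (term p) (seq 0 (S n))); [apply partial_sum_terms|].
  exact (esum_list_of_fin _ _ _ _ Hk Hs).
Qed.

Lemma functional_val_dominated p v U sU :
  (forall j, (j < n)%nat -> exists m, forall a, m <= H j a) ->
  is_prob p -> (forall a, 0 <= h a (p a)) ->
  functional_val h n H theta p v -> v <> MInf ->
  HasSum U sU -> (forall a, lagrangian p a <= U a) ->
  exists W, v = Fin W /\ HasSum (lagrangian p) W.
Proof.
  intros hH Hp hh Hf Hv HU Hle.
  destruct (functional_val_terms p v Hf Hv) as [vI [vH [Hs Hk]]].
  destruct (esum_list_dominated (term p) _ _ v
              (fun k Hin => conj (Hk k Hin) (term_minorised p k _ hH Hp hh Hin (Hk k Hin)))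
              Hs U sU HU) as [W [HW HsW]].
  { intros a. rewrite partial_sum_terms. apply Hle. }
  exists W; split; auto.
  apply HasSum_ext with (partial_sum (term p) (seq 0 (S n))); [apply partial_sum_terms|auto].
Qed.

End Decomposition.

Lemma derivable_pt_lim_increment (g : R -> R) y l s :
  derivable_pt_lim g y l -> derivable_pt_lim (fun e => g (y + s * e) - g y) 0 (s * l).
Proof.
  intros Dg.
  assert (Daff : derivable_pt_lim (fun e => y + s * e) 0 s).
  { intros eps Heps. exists (mkposreal 1 Rlt_0_1). intros e He _. cbv beta.
    replace ((y + s * (0 + e) - (y + s * 0)) / e - s) with 0 by (field; exact He).
    rewrite Rabs_R0; exact Heps. }
  assert (Dg' : derivable_pt_lim g (y + s * 0) l) by (rewrite Rmult_0_r, Rplus_0_r; exact Dg).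
  pose proof (derivable_pt_lim_minus _ _ 0 _ _
                (derivable_pt_lim_comp _ _ 0 _ _ Daff Dg') (derivable_pt_lim_const (g y) 0)) as D.
  replace (s * l) with (l * s - 0) by ring.
  exact D.
Qed.

Lemma derivative_nonpos_of_right_nonpos (g : R -> R) l delta :
  derivable_pt_lim g 0 l -> g 0 = 0 -> 0 < delta ->
  (forall e, 0 < e < delta -> g e <= 0) -> l <= 0.
Proof.
  intros Dg g0 Hd Hneg. destruct (Rle_dec l 0) as [|Hl]; auto. exfalso.
  destruct (Dg (l / 2)) as [d Hdd]; [lra|].
  pose proof (cond_pos d) as Hdpos.
  set (e := Rmin delta d / 2).
  assert (He : 0 < e /\ e < delta /\ e < d).
  { pose proof (Rmin_l delta d). pose proof (Rmin_r delta d).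
    assert (0 < Rmin delta d) by (apply Rmin_pos; lra). unfold e; lra. }
  specialize (Hdd e ltac:(lra) ltac:(rewrite Rabs_pos_eq; lra)).
  rewrite Rplus_0_l, g0, Rminus_0_r in Hdd.
  apply Rabs_def2 in Hdd.
  specialize (Hneg e ltac:(lra)).
  assert (0 < / e) by (apply Rinv_0_lt_compat; lra).
  unfold Rdiv in Hdd. nra.
Qed.

Section EntropyFunction.
Context (h f : R -> R) (hhf : entropy_fun h f).

Lemma entropy_concave x y t : 0 <= x <= 1 -> 0 <= y <= 1 -> 0 < t < 1 ->
  t * h x + (1 - t) * h y <= h (t * x + (1 - t) * y).
Proof.
  destruct hhf as [_ [Hc _]]. intros Hx Hy Ht. destruct (Req_dec x y) as [->|Hne].
  - replace (t * y + (1 - t) * y) with y by ring. lra.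
  - left; apply Hc; auto.
Qed.

(* Concavity and h(0) = h(1) = 0 make h nonnegative on [0,1]. *)
Lemma entropy_nonneg x : 0 <= x <= 1 -> 0 <= h x.
Proof.
  intros Hx. destruct hhf as [_ [_ [H0 [H1 _]]]].
  destruct (Req_dec x 0) as [->|N0]; [lra|].
  destruct (Req_dec x 1) as [->|N1]; [lra|].
  pose proof (entropy_concave 0 1 (1 - x) ltac:(lra) ltac:(lra) ltac:(lra)) as Hc.
  replace ((1 - x) * 0 + (1 - (1 - x)) * 1) with x in Hc by ring.
  rewrite H0, H1 in Hc. lra.
Qed.

Lemma entropy_chord y e : 0 < e < y -> y <= 1 -> h y - h (y - e) <= (e / y) * h y.
Proof.
  intros He Hy. destruct hhf as [_ [_ [H0 _]]].
  assert (Ht : 0 < e / y < 1).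
  { split; [apply Rdiv_lt_0_compat; lra|].
    apply Rmult_lt_reg_r with y; [lra|]. unfold Rdiv; rewrite Rmult_assoc, Rinv_l; lra. }
  pose proof (entropy_concave 0 y (e / y) ltac:(lra) ltac:(lra) Ht) as Hc.
  replace (e / y * 0 + (1 - e / y) * y) with (y - e) in Hc by (field; lra).
  rewrite H0 in Hc. lra.
Qed.

(* The gap
   t (h(x) - h(y)) - (h(y + t (x - y)) - h(y)) is nonpositive on (0,1) by
   concavity and vanishes at 0, so its derivative at 0 is nonpositive. *)
Lemma entropy_tangent y x : 0 < y < 1 -> 0 <= x <= 1 -> h x <= h y - f y * (x - y).
Proof.
  intros Hy Hx. pose proof hhf as [_ [_ [_ [_ [Hd _]]]]].
  set (gap := fun t => t * (h x - h y) - (h (y + (x - y) * t) - h y)).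
  assert (Dgap : derivable_pt_lim gap 0 ((h x - h y) * 1 - (x - y) * - f y)).
  { pose proof (derivable_pt_lim_increment id 0 _ (h x - h y) (derivable_pt_lim_id 0)) as Dl.
    pose proof (derivable_pt_lim_increment h y _ (x - y) (Hd y Hy)) as Dh.
    apply (derivable_pt_lim_ext _ _ 0 _) with (2 := derivable_pt_lim_minus _ _ 0 _ _ Dl Dh).
    intros t. unfold gap, minus_fct, id. ring. }
  assert (Hgap : forall t, 0 < t < 1 -> gap t <= 0).
  { intros t Ht. pose proof (entropy_concave x y t Hx ltac:(lra) Ht) as Hc.
    replace (t * x + (1 - t) * y) with (y + (x - y) * t) in Hc by ring.
    unfold gap. lra. }
  assert (Hgap0 : gap 0 = 0) by (unfold gap; rewrite Rmult_0_r, Rplus_0_r; ring).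
  pose proof (derivative_nonpos_of_right_nonpos gap _ 1 Dgap Hgap0 Rlt_0_1 Hgap). lra.
Qed.

End EntropyFunction.

Section Probabilities.
Context {A : Type}.

Lemma prob_two (p : A -> R) a b : is_prob p -> a <> b -> p a + p b <= 1.
Proof.
  intros [Hn Hs] Hab.
  replace (p a + p b) with (p a * 1 + p b * 1) by ring.
  eapply HasSum_le; [|apply HasSum_plus; apply HasSum_scal; apply HasSum_indicator|exact Hs].
  intros x; cbv beta.
  destruct (classic (x = a)) as [->|Ha].
  { rewrite (indicator_eq a a), (indicator_neq b a); auto; lra. }
  destruct (classic (x = b)) as [->|Hb].
  { rewrite (indicator_neq a b), (indicator_eq b b); auto; lra. }
  rewrite (indicator_neq a x), (indicator_neq b x); auto. specialize (Hn x); lra.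
Qed.

Lemma prob_le1 (p : A -> R) a : is_prob p -> p a <= 1.
Proof.
  intros [Hn Hs]. replace (p a) with (p a * 1) by ring.
  eapply HasSum_le; [|apply HasSum_scal; apply HasSum_indicator|exact Hs].
  intros x. destruct (classic (x = a)) as [->|Ha].
  - rewrite (indicator_eq a a); auto; lra.
  - rewrite (indicator_neq a x); auto. specialize (Hn x); lra.
Qed.

Lemma prob_pos (p : A -> R) : is_prob p -> exists b, 0 < p b.
Proof.
  intros [Hn Hs]. apply NNPP; intros Hno.
  assert (Hzero : HasSum p 0).
  { apply HasSum_ext with (fun _ => 0); [|apply HasSum_zero].
    intros a. specialize (Hn a). destruct (Rle_lt_dec (p a) 0); [lra|].
    exfalso; apply Hno; eauto. }
  pose proof (HasSum_unique _ _ _ Hs Hzero). lra.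
Qed.

Lemma full_mass_point (p : A -> R) a :
  is_prob p -> (forall y, 0 < p y) -> p a = 1 -> forall y, y = a.
Proof.
  intros Hp Hpos Ha y. apply NNPP; intros Hya.
  pose proof (prob_two p a y Hp (not_eq_sym Hya)). pose proof (Hpos y). lra.
Qed.

Lemma prob_single_point (p : A -> R) x : is_prob p -> (forall y, y = x) -> p x = 1.
Proof.
  intros [Hn Hs] Hall.
  assert (Hx : HasSum p (p x * 1)).
  { apply HasSum_ext with (fun y => p x * indicator x y); [|apply HasSum_scal, HasSum_indicator].
    intros y. rewrite (indicator_eq _ _ (Hall y)), (Hall y). ring. }
  pose proof (HasSum_unique _ _ _ Hs Hx). lra.
Qed.

Definition transfer (p : A -> R) a b (e : R) (x : A) : R :=
  p x + e * indicator a x - e * indicator b x.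

Lemma transfer_at_src p a b e : a <> b -> transfer p a b e a = p a + e.
Proof.
  intros Hab; unfold transfer; rewrite (indicator_eq a a), (indicator_neq b a); auto; ring.
Qed.

Lemma transfer_at_dst p a b e : a <> b -> transfer p a b e b = p b - e.
Proof.
  intros Hab; unfold transfer; rewrite (indicator_neq a b), (indicator_eq b b); auto; ring.
Qed.

Lemma transfer_elsewhere p a b e x : x <> a -> x <> b -> transfer p a b e x = p x.
Proof.
  intros Ha Hb; unfold transfer; rewrite (indicator_neq a x), (indicator_neq b x); auto; ring.
Qed.

Lemma transfer_prob p a b e : is_prob p -> a <> b -> 0 <= p a + e -> 0 <= p b - e ->
  is_prob (transfer p a b e).
Proof.
  intros [Hn Hs] Hab H1 H2. split.
  - intros x. destruct (classic (x = a)) as [->|Ha]; [rewrite transfer_at_src; auto|].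
    destruct (classic (x = b)) as [->|Hb]; [rewrite transfer_at_dst; auto|].
    rewrite transfer_elsewhere; auto.
  - replace 1 with (1 + e * 1 - e * 1) by ring.
    apply HasSum_minus; [apply HasSum_plus|]; auto; apply HasSum_scal, HasSum_indicator.
Qed.

End Probabilities.

Definition transfer_gain {A : Type} (h : A -> R -> R) (E : A -> R) (p : A -> R)
    (a b : A) (e : R) : R :=
  (h a (p a + e) - h a (p a)) + (h b (p b - e) - h b (p b)) - e * (E a - E b).

(* Only two terms of each series change under a transfer, so a finite value of
   the functional changes exactly by the transfer gain. *)
Lemma transfer_functional {A : Type} (h : A -> R -> R) n H theta (p : A -> R) c a b e :
  a <> b -> functional_val h n H theta p (Fin c) ->
  functional_val h n H theta (transfer p a b e)
    (Fin (c + transfer_gain h (energy n H theta) p a b e)).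
Proof.
  intros Hab [vI [vH [HI [HH Hs]]]].
  set (p' := transfer p a b e).
  set (d := fun x => h x (p' x) - h x (p x)).
  set (dj := fun j x => p' x * H j x - p x * H j x).
  assert (Hd : HasSum d (d a + d b)).
  { apply HasSum_two_point_support; auto.
    intros x Ha Hb. unfold d, p'. rewrite transfer_elsewhere; auto; ring. }
  assert (Hdj : forall j, HasSum (dj j) (dj j a + dj j b)).
  { intros j. apply HasSum_two_point_support; auto.
    intros x Ha Hb. unfold dj, p'. rewrite transfer_elsewhere; auto; ring. }
  exists (shift vI (d a + d b)), (fun j => shift (vH j) (dj j a + dj j b)).
  split; [|split].
  - apply (esum_shift _ _ d _ _ HI Hd). intros x; unfold d; ring.
  - intros j Hj. apply (esum_shift _ _ (dj j) _ _ (HH j Hj) (Hdj j)).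
    intros x; unfold dj; ring.
  - rewrite functional_terms. rewrite functional_terms in Hs.
    set (sk := fun k => match k with O => d a + d b
                          | S j => - theta j * (dj j a + dj j b) end).
    rewrite (map_ext _ (fun k => shift (term_val theta vI vH k) (sk k)));
      [|intros [|j]; simpl; auto; apply scale_shift].
    rewrite (sum_shift _ sk _ _ Hs). simpl. f_equal. f_equal.
    rewrite <- seq_shift, map_map.
    rewrite (sum_list_map_ext _ (fun j => (- e) * (theta j * H j a) + e * (theta j * H j b)));
      [|intros j; simpl; unfold dj, p'; rewrite transfer_at_src, transfer_at_dst by auto; ring].
    unfold transfer_gain, energy, sum_upto, d, p'.
    rewrite transfer_at_src, transfer_at_dst by auto.
    rewrite sum_list_map_plus, !sum_list_map_scal. ring.
Qed.

Lemma transfer_gain_derivative {A : Type} (h f : A -> R -> R) (E p : A -> R) a b :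
  entropy_fun (h a) (f a) -> entropy_fun (h b) (f b) ->
  0 < p a < 1 -> 0 < p b < 1 ->
  derivable_pt_lim (transfer_gain h E p a b) 0
    (- f a (p a) + f b (p b) - (E a - E b)).
Proof.
  intros [_ [_ [_ [_ [Da _]]]]] [_ [_ [_ [_ [Db _]]]]] Ha Hb.
  pose proof (derivable_pt_lim_increment (h a) (p a) _ 1 (Da (p a) Ha)) as Ia.
  pose proof (derivable_pt_lim_increment (h b) (p b) _ (-1) (Db (p b) Hb)) as Ib.
  pose proof (derivable_pt_lim_increment id 0 _ (E a - E b) (derivable_pt_lim_id 0)) as Il.
  pose proof (derivable_pt_lim_minus _ _ 0 _ _ (derivable_pt_lim_plus _ _ 0 _ _ Ia Ib) Il) as D.
  replace (- f a (p a) + f b (p b) - (E a - E b))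
    with (1 * - f a (p a) + -1 * - f b (p b) - (E a - E b) * 1) by ring.
  apply (derivable_pt_lim_ext _ _ 0 _) with (2 := D).
  intros e. unfold transfer_gain, plus_fct, minus_fct, id.
  replace (p a + 1 * e) with (p a + e) by ring.
  replace (p b + -1 * e) with (p b - e) by ring. ring.
Qed.

Section Necessity.
Context {A : Type} (h f : A -> R -> R) (hhf : forall a, entropy_fun (h a) (f a))
  (n : nat) (H : nat -> A -> R) (theta : nat -> R)
  (pstar : A -> R) (hp : is_prob pstar) (c : R)
  (hc : functional_val h n H theta pstar (Fin c))
  (hopt : forall p, is_prob p -> forall v, functional_val h n H theta p v -> Rbar_le v (Fin c)).

Local Notation E := (energy n H theta).

Lemma transfer_gain_nonpos a b e : a <> b -> 0 <= pstar a + e -> 0 <= pstar b - e ->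
  transfer_gain h E pstar a b e <= 0.
Proof.
  intros Hab H1 H2.
  pose proof (hopt _ (transfer_prob pstar a b e hp Hab H1 H2) _
                (transfer_functional h n H theta pstar c a b e Hab hc)) as Hle.
  simpl in Hle. lra.
Qed.

(* The optimum charges every point: moving a small mass e onto a point a with
   pstar a = 0 would gain at least e (- f_a(e) - K) for a constant K, which is
   positive for small e since f_a(0+) = -infinity. *)
Lemma optimum_full_support (hf0 : forall a, f_zero_minf (f a)) a : 0 < pstar a.
Proof.
  destruct (Rlt_le_dec 0 (pstar a)) as [|Hle]; auto. exfalso.
  assert (Ha0 : pstar a = 0) by (pose proof (proj1 hp a); lra).
  destruct (prob_pos pstar hp) as [b Hb].
  assert (Hab : a <> b) by (intros ->; lra).
  set (y := pstar b) in *.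
  assert (Hy1 : y <= 1) by apply (prob_le1 pstar b hp).
  set (K := h b y / y + E a - E b).
  assert (Hbound : forall e, 0 < e <= y / 2 -> - K <= f a e).
  { intros e He.
    pose proof (transfer_gain_nonpos a b e Hab ltac:(lra) ltac:(fold y; lra)) as Hg.
    unfold transfer_gain in Hg. fold y in Hg. rewrite Ha0, Rplus_0_l in Hg.
    pose proof (entropy_tangent (h a) (f a) (hhf a) e 0 ltac:(lra) ltac:(lra)) as HT.
    pose proof (entropy_chord (h b) (f b) (hhf b) y e ltac:(lra) Hy1) as HC.
    destruct (hhf a) as [_ [_ [Hh0 _]]]. rewrite Hh0 in Hg, HT.
    assert (Hchord : e / y * h b y = e * (h b y / y)) by (field; lra).
    assert (Hprod : 0 <= e * (f a e + K)) by (unfold K; nra).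
    apply Rmult_le_reg_l with e; lra. }
  destruct (hf0 a (- K)) as [delta [Hdel Hf]].
  set (e := Rmin (delta / 2) (y / 2)).
  assert (He : 0 < e /\ e <= delta / 2 /\ e <= y / 2).
  { split; [apply Rmin_pos; lra|split; [apply Rmin_l|apply Rmin_r]]. }
  specialize (Hbound e ltac:(lra)). specialize (Hf e ltac:(lra)). lra.
Qed.

Lemma optimum_marginal_ineq (hpos : forall a, 0 < pstar a) a b : a <> b ->
  - f a (pstar a) + f b (pstar b) - (E a - E b) <= 0.
Proof.
  intros Hab.
  pose proof (prob_two pstar a b hp Hab). pose proof (hpos a). pose proof (hpos b).
  apply (derivative_nonpos_of_right_nonpos (transfer_gain h E pstar a b) _ (pstar b)).
  - apply transfer_gain_derivative; auto; lra.
  - unfold transfer_gain. rewrite Rplus_0_r, Rminus_0_r. ring.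
  - auto.
  - intros e He. apply transfer_gain_nonpos; auto; lra.
Qed.

Lemma optimum_lagrange_condition (hf0 : forall a, f_zero_minf (f a)) :
  exists alpha, forall a, 0 < pstar a /\ f a (pstar a) = - alpha - E a.
Proof.
  pose proof (optimum_full_support hf0) as hpos.
  destruct (prob_pos pstar hp) as [a0 _].
  exists (- f a0 (pstar a0) - E a0). intros a; split; auto.
  destruct (classic (a = a0)) as [->|Hne]; [ring|].
  pose proof (optimum_marginal_ineq hpos a a0 Hne).
  pose proof (optimum_marginal_ineq hpos a0 a (not_eq_sym Hne)). lra.
Qed.

End Necessity.

(* At y = 1 the bound is only needed for x = 1. *)
Lemma lagrangian_tangent_bound (h f : R -> R) (E alpha x y : R) :
  entropy_fun h f -> 0 < y <= 1 -> 0 <= x <= 1 -> (y = 1 -> x = 1) ->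
  f y = - alpha - E ->
  h x - x * E <= (h y - y * E) + alpha * (x - y).
Proof.
  intros hhf Hy Hx Hy1 Hf.
  destruct (Rlt_le_dec y 1) as [Hlt|Hge].
  - pose proof (entropy_tangent h f hhf y x ltac:(lra) Hx) as HT.
    rewrite Hf in HT. lra.
  - assert (y = 1) as -> by lra. rewrite (Hy1 eq_refl). lra.
Qed.

Lemma lagrange_condition_optimal {A : Type} (h f : A -> R -> R)
  (hhf : forall a, entropy_fun (h a) (f a))
  (n : nat) (H : nat -> A -> R)
  (hH : forall j, (j < n)%nat -> exists m, forall a, m <= H j a)
  (theta : nat -> R) (pstar : A -> R) (hp : is_prob pstar) (c : R)
  (hc : functional_val h n H theta pstar (Fin c)) (alpha : R)
  (hal : forall a, 0 < pstar a /\ f a (pstar a) = - alpha - energy n H theta a) :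
  variational_principle h n H theta pstar.
Proof.
  exists c; split; [exact hc|].
  intros p Hp v Hv.
  destruct (classic (v = MInf)) as [->|HvM]; [exact I|].
  assert (Hbound : forall a, lagrangian h n H theta p a <=
            lagrangian h n H theta pstar a + alpha * (p a - pstar a)).
  { intros a. destruct (hal a) as [Pa Fa].
    apply (lagrangian_tangent_bound (h a) (f a)); auto.
    - split; [exact Pa|apply prob_le1; auto].
    - split; [apply (proj1 Hp)|apply prob_le1; auto].
    - intros H1. apply prob_single_point; auto.
      apply (full_mass_point pstar a hp (fun y => proj1 (hal y)) H1). }
  assert (Hmaj : HasSum (fun a => lagrangian h n H theta pstar a + alpha * (p a - pstar a))
                        (c + alpha * (1 - 1))).
  { apply HasSum_plus; [exact (functional_val_fin h n H theta pstar c hc)|].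
    apply HasSum_scal, HasSum_minus; [exact (proj2 Hp)|exact (proj2 hp)]. }
  assert (Hnonneg : forall a, 0 <= h a (p a)).
  { intros a. apply (entropy_nonneg _ _ (hhf a)).
    split; [apply (proj1 Hp)|apply prob_le1; auto]. }
  destruct (functional_val_dominated h n H theta p v _ _ hH Hp Hnonneg Hv HvM Hmaj Hbound)
    as [W [-> HW]].
  simpl. pose proof (HasSum_le _ _ _ _ Hbound HW Hmaj). lra.
Qed.

Theorem theorem1
  (A : Type) (hA : countable A)
  (h f : A -> R -> R)
  (hhf : forall a, entropy_fun (h a) (f a))
  (hf0 : forall a, f_zero_minf (f a))
  (n : nat) (H : nat -> A -> R)
  (hH : forall j, (j < n)%nat -> exists m, forall a, m <= H j a)
  (theta : nat -> R)
  (pstar : A -> R) (hp : is_prob pstar)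
  (hfin : exists c, functional_val h n H theta pstar (Fin c)) :
  variational_principle h n H theta pstar <->
  exists alpha : R, forall a,
    0 < pstar a /\
    f a (pstar a) = - alpha - sum_upto n (fun j => theta j * H j a).
Proof.
  split.
  - intros [c [Hc Hopt]].
    exact (optimum_lagrange_condition h f hhf n H theta pstar hp c Hc Hopt hf0).
  - intros [alpha Hal]. destruct hfin as [c Hc].
    exact (lagrange_condition_optimal h f hhf n H hH theta pstar hp c Hc alpha Hal).
Qed.
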